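(* Fix $\alpha\in(0,1)$ and define, for $t\in\mathbb N^*$, \[ \gamma_0(t,\alpha)=\frac{t^2}{\left(\frac{\alpha^2}{t+1}\right)^{1/t}(t+1)-1}-t. \] Then, as $t\to\infty$, $\gamma_0(t,\alpha)=2\log(1/\alpha)+\log(t+1)+o(1)$. *)

From Stdlib Require Import Reals.
From Coquelicot Require Import Coquelicot.
Open Scope R_scope.

Definition gamma0 (t : nat) (alpha : R) : R :=
  (INR t) ^ 2 /
    (Rpower (alpha ^ 2 / (INR t + 1)) (1 / INR t) * (INR t + 1) - 1)
  - INR t.

(* With M = 2 ln (1/alpha) + ln (t+1) one has (alpha^2/(t+1))^(1/t) = exp (-M/t),
   and exp (-M/t) = 1 - M/t + O((M/t)^2).  For any E in that window the quotient
   t^2 / (E (t+1) - 1) - t equals M + O((1+M)^2 / t), and (1+M)^2 / t -> 0 because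
   (ln t)^2 / t -> 0. *)

From Stdlib Require Import Reals Lra Lia Psatz.
From Coquelicot Require Import Coquelicot.
Open Scope R_scope.

Lemma exp_opp_le_quadratic (x : R) : 0 <= x -> exp (- x) <= 1 - x + x ^ 2.
Proof.
  intros Hx.
  rewrite exp_Ropp.
  apply Rle_trans with (/ (1 + x)).
  - apply Rinv_le_contravar; [lra | apply exp_ineq1_le].
  - apply Rmult_le_reg_l with (1 + x); [lra |].
    rewrite Rinv_r by lra. nra.
Qed.

Lemma shifted_quotient_expansion (t M E : R) :
  1 <= t -> 0 <= M -> 4 * M <= t ->
  1 - M / t <= E <= 1 - M / t + (M / t) ^ 2 ->
  Rabs (t ^ 2 / (E * (t + 1) - 1) - t - M) <= 16 * ((1 + M) ^ 2 / (t + 1)).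
Proof.
  intros Ht HM HMt HE.
  set (x := M / t) in HE.
  assert (HMx : M = t * x) by (unfold x; field; lra).
  clearbody x.
  assert (Hx : 0 <= x <= 1 / 4) by (subst M; split; nra).
  set (D := E * (t + 1) - 1).
  assert (HD : t / 2 <= D) by (unfold D; nra).
  set (N := t ^ 2 - (t + M) * D).
  assert (HN : Rabs N <= 4 * (1 + M) ^ 2).
  { assert (Hr : 0 <= t * (t + 1) * (E - (1 - x)) <= 2 * M ^ 2).
    { split; [nra |].
      apply Rle_trans with (t * (t + 1) * x ^ 2); [nra |].
      subst M. nra. }
    assert (HNr : N = M ^ 2 + M + M * x - (1 + x) * (t * (t + 1) * (E - (1 - x))))
      by (unfold N, D; subst M; ring).
    apply Rabs_le. rewrite HNr. split; nra. }
  replace (t ^ 2 / D - t - M) with (N / D) by (unfold N; field; lra).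
  rewrite Rabs_div, (Rabs_right D) by lra.
  apply Rle_trans with (4 * (1 + M) ^ 2 / (t / 2)).
  - apply Rmult_le_compat; try lra.
    + apply Rabs_pos.
    + left. apply Rinv_0_lt_compat. lra.
    + apply Rinv_le_contravar; lra.
  - apply Rmult_le_reg_r with (t * (t + 1)); [nra |].
    replace (4 * (1 + M) ^ 2 / (t / 2) * (t * (t + 1))) with (8 * (1 + M) ^ 2 * (t + 1)) by (field; lra).
    replace (16 * ((1 + M) ^ 2 / (t + 1)) * (t * (t + 1))) with (16 * (1 + M) ^ 2 * t) by (field; lra).
    nra.
Qed.

Lemma is_lim_affine_ln_div (a b : R) :
  is_lim (fun z => (a + b * ln z) / z) p_infty 0.
Proof.
  apply is_lim_ext with (fun z => a * / z + b * (ln z / z)).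
  { intros z. unfold Rdiv. ring. }
  replace (Finite 0) with (Finite (a * 0 + b * 0)) by (f_equal; ring).
  apply is_lim_plus'.
  - apply (is_lim_scal_l (fun z => / z) a p_infty 0).
    apply (is_lim_inv (fun z => z) p_infty p_infty); [apply is_lim_id | discriminate].
  - apply (is_lim_scal_l _ b p_infty 0). exact is_lim_div_ln_p.
Qed.

(* Substituting [y = z^2] reduces to [(c + 2 ln z) / z -> 0]. *)
Lemma is_lim_sqr_affine_ln_div (c : R) :
  is_lim (fun y => (c + ln y) ^ 2 / y) p_infty 0.
Proof.
  set (f := fun z => (c + 2 * ln z) / z).
  assert (Hf : is_lim (fun y => f (sqrt y)) p_infty 0).
  { apply (is_lim_comp f sqrt p_infty 0 p_infty).
    - apply is_lim_affine_ln_div.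
    - apply (is_lim_sqrt_p (fun y => y)). apply is_lim_id.
    - exists 0. intros y _. discriminate. }
  apply is_lim_ext_loc with (fun y => f (sqrt y) * f (sqrt y)).
  - exists 0. intros y Hy.
    pose proof (sqrt_lt_R0 y Hy) as Hs.
    pose proof (sqrt_sqrt y (Rlt_le _ _ Hy)) as Hss.
    assert (Hln : ln y = 2 * ln (sqrt y))
      by (rewrite <- Hss at 1; rewrite ln_mult by lra; ring).
    unfold f. rewrite Hln. set (z := sqrt y) in *. rewrite <- Hss. field. lra.
  - replace (Finite 0) with (Rbar_mult 0 0) by (simpl; f_equal; ring).
    apply is_lim_mult; [exact Hf | exact Hf | exact I].
Qed.

Lemma is_lim_seq_sqr_affine_ln_div (c : R) (u : nat -> R) :
  is_lim_seq u p_infty -> is_lim_seq (fun n => (c + ln (u n)) ^ 2 / u n) 0.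
Proof.
  apply (is_lim_comp_seq (fun y => (c + ln y) ^ 2 / y)); [apply is_lim_sqr_affine_ln_div |].
  exists 0%nat. intros; discriminate.
Qed.

Lemma eventually_affine_ln_lt (a eps : R) (u : nat -> R) :
  0 < eps -> is_lim_seq u p_infty -> eventually (fun n => a + ln (u n) < eps * u n).
Proof.
  intros Heps Hu.
  assert (Hl : is_lim_seq (fun n => (a + 1 * ln (u n)) / u n) 0).
  { apply (is_lim_comp_seq (fun y => (a + 1 * ln y) / y) u p_infty 0 (is_lim_affine_ln_div a 1));
      [exists 0%nat; intros; discriminate | exact Hu]. }
  apply is_lim_seq_spec in Hl, Hu.
  apply (filter_imp (fun n => 0 < u n /\ Rabs ((a + 1 * ln (u n)) / u n - 0) < eps)).
  - intros n [Hpos Hsmall]. apply Rabs_def2 in Hsmall.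
    apply Rmult_lt_reg_r with (/ u n); [now apply Rinv_0_lt_compat |].
    replace (eps * u n * / u n) with eps by (field; lra).
    replace ((a + ln (u n)) * / u n) with ((a + 1 * ln (u n)) / u n) by (unfold Rdiv; ring).
    lra.
  - apply filter_and; [exact (Hu 0) | exact (Hl (mkposreal eps Heps))].
Qed.

Lemma gamma0_exp (t : nat) (alpha : R) : 0 < alpha -> (0 < t)%nat ->
  gamma0 t alpha =
  INR t ^ 2 / (exp (- ((2 * ln (1 / alpha) + ln (INR t + 1)) / INR t)) * (INR t + 1) - 1)
  - INR t.
Proof.
  intros Ha Ht.
  apply lt_0_INR in Ht.
  unfold gamma0, Rpower.
  rewrite ln_div, ln_pow, ln_div, ln_1 by (try apply pow_lt; lra).
  do 5 f_equal. simpl. field. lra.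
Qed.

Lemma gamma0_sub_log_bound (alpha : R) (t : nat) :
  0 < alpha < 1 -> (0 < t)%nat ->
  4 * (2 * ln (1 / alpha) + ln (INR t + 1)) <= INR t ->
  Rabs (gamma0 t alpha - (2 * ln (1 / alpha) + ln (INR t + 1)))
    <= 16 * ((1 + 2 * ln (1 / alpha) + ln (INR t + 1)) ^ 2 / (INR t + 1)).
Proof.
  intros Ha Ht Hsmall.
  rewrite (gamma0_exp t alpha (proj1 Ha) Ht).
  assert (Ht1 : 1 <= INR t) by exact (le_INR 1 t Ht).
  set (M := 2 * ln (1 / alpha) + ln (INR t + 1)) in *.
  assert (HM : 0 <= M).
  { assert (0 < ln (1 / alpha)).
    { rewrite <- ln_1. apply ln_increasing; [lra |].
      apply Rmult_lt_reg_r with alpha; [lra |]. field_simplify; lra. }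
    assert (0 < ln (INR t + 1)) by (rewrite <- ln_1; apply ln_increasing; lra).
    unfold M. lra. }
  replace (1 + 2 * ln (1 / alpha) + ln (INR t + 1)) with (1 + M) by (unfold M; ring).
  assert (Hx : 0 <= M / INR t) by (apply Rdiv_le_0_compat; lra).
  apply shifted_quotient_expansion; try lra.
  split; [pose proof (exp_ineq1_le (- (M / INR t))); lra | now apply exp_opp_le_quadratic].
Qed.

Theorem proposition1 (alpha : R) (Ha0 : 0 < alpha) (Ha1 : alpha < 1) :
  is_lim_seq
    (fun n : nat =>
       gamma0 (S n) alpha - (2 * ln (1 / alpha) + ln (INR (S n) + 1)))
    0.
Proof.
  set (K := 2 * ln (1 / alpha)).
  set (s := fun n => INR (S n) + 1).
  assert (Hs : is_lim_seq s p_infty).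
  { apply is_lim_seq_le_p_loc with INR; [| exact is_lim_seq_INR].
    exists 0%nat. intros n _. unfold s. rewrite S_INR. lra. }
  apply is_lim_seq_abs_0.
  apply is_lim_seq_le_le_loc with (fun _ => 0) (fun n => 16 * ((1 + K + ln (s n)) ^ 2 / s n)).
  - destruct (eventually_affine_ln_lt K (1 / 8) s ltac:(lra) Hs) as [N HN].
    exists N. intros n Hn. split; [apply Rabs_pos |].
    apply gamma0_sub_log_bound; [lra | lia |].
    specialize (HN n Hn). unfold s in HN. fold K. rewrite S_INR in *.
    pose proof (pos_INR n). lra.
  - apply is_lim_seq_const.
  - replace (Finite 0) with (Rbar_mult 16 0) by (simpl; f_equal; ring).
    apply is_lim_seq_scal_l, is_lim_seq_sqr_affine_ln_div, Hs.
Qed.
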